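(* Let $u_1,u_2,u_3,u_4$ be Laurent polynomials with symmetry types $\mathrm{S}u_j(z)=\epsilon_jz^{c_j}$, $\epsilon_j\in\{\pm1\}$, $c_j\in\mathbb Z$, $j=1,2,3,4$, and suppose $\mathrm{S}u_1/\mathrm{S}u_2=\mathrm{S}u_3/\mathrm{S}u_4$. Define $$u_5(z):=u_1(z)u_3(z)+z^{c_1}u_2^\star(z)u_4(z),\qquad u_6(z):=u_2(z)u_3(z)+z^{c_1}u_1^\star(z)u_4(z).$$ Then $\mathrm{S}u_5(z)=\epsilon_1\epsilon_3z^{c_1+c_3}$, $\mathrm{S}u_6(z)=\epsilon_2\epsilon_3z^{c_2+c_3}$, $\mathrm{S}u_5/\mathrm{S}u_6=\mathrm{S}u_1/\mathrm{S}u_2=\mathrm{S}u_3/\mathrm{S}u_4$, and $$u_5u_5^\star-u_6u_6^\star=(u_1u_1^\star-u_2u_2^\star)(u_3u_3^\star-u_4u_4^\star).$$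
   Context: Laurent polynomial $u(z)=\sum_ku(k)z^k$ with finitely many nonzero complex coefficients; $u^\star(z):=\sum_k\overline{u(k)}z^{-k}$. $u$ has symmetry of type $\epsilon z^c$ if $u(z)=\epsilon z^cu(z^{-1})$; for nonzero $u$, $\mathrm{S}u(z):=u(z)/u(z^{-1})$; the zero polynomial has symmetry of every type. *)

From HB Require Import structures.
From mathcomp Require Import all_boot all_order all_algebra.
From mathcomp Require Import finmap.
Set Implicit Arguments. Unset Strict Implicit. Unset Printing Implicit Defensive.
Import Order.TTheory GRing.Theory Num.Theory.
Local Open Scope fset_scope.
Local Open Scope ring_scope.

(* A Laurent polynomial u(z) = \sum_k u(k) z^k with coefficients in C is a
   finitely supported coefficient function int -> C (default value 0). *)
Definition laurent (C : numClosedFieldType) := {fsfun int -> C with 0}.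

Section Laurent.
Variable C : numClosedFieldType.

Definition lzero : laurent C := [fsfun].

Definition lmono (a : C) (c : int) : laurent C := [fsfun k in [fset c] => a].

Definition ladd (u v : laurent C) : laurent C :=
  [fsfun k in finsupp u `|` finsupp v => u k + v k].
Definition lsub (u v : laurent C) : laurent C :=
  [fsfun k in finsupp u `|` finsupp v => u k - v k].

(* product: (uv)(k) = \sum_i u(i) v(k - i) (the sum is over the support of u;
   outside the sumset supp u + supp v this sum is 0) *)
Definition lmul (u v : laurent C) : laurent C :=
  [fsfun k in [fset (i + j) | i in finsupp u, j in finsupp v] =>
     \sum_(i <- finsupp u) u i * v (k - i)].

(* u(z^{-1}) = \sum_k u(-k) z^k *)
Definition lrefl (u : laurent C) : laurent C :=
  [fsfun k in [fset - i | i in finsupp u] => u (- k)].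

(* u^star(z) = \sum_k conj(u(k)) z^{-k} *)
Definition lstar (u : laurent C) : laurent C :=
  [fsfun k in [fset - i | i in finsupp u] => (u (- k))^*].

Definition sym_type (u : laurent C) (eps : C) (c : int) : Prop :=
  u = lmul (lmono eps c) (lrefl u).

(* "S u (z) = eps z^c" for nonzero u, where S u(z) = u(z)/u(z^{-1}):
   u is nonzero and u(z) = eps z^c u(z^{-1}). *)
Definition Sym_is (u : laurent C) (eps : C) (c : int) : Prop :=
  u <> lzero /\ sym_type u eps c.

End Laurent.

From HB Require Import structures.
From mathcomp Require Import all_boot all_order all_algebra.
From mathcomp Require Import finmap.
From mathcomp Require Import ring zify.
Set Implicit Arguments. Unset Strict Implicit. Unset Printing Implicit Defensive.
Import Order.TTheory GRing.Theory Num.Theory.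
Local Open Scope fset_scope.
Local Open Scope ring_scope.

(* Evaluation at the points of C^x is an injective ring morphism from Laurent
   polynomials to functions, under which the symmetry condition becomes the
   functional equation u(z) = eps z^c u(1/z) and u^star becomes
   z |-> conj (u (1 / conj z)).  Symmetry types multiply under products,
   z^a has type z^(2a), and u^star has type conj(eps) z^(-c); the condition
   Su1/Su2 = Su3/Su4 says exactly that both summands of u5 (and of u6) have
   the same type.  The norm identity is a field identity between the values
   of the u_j and u_j^star at a single point z. *)

Lemma poly_eq0_on_nonzero (R : numDomainType) (p : {poly R}) :
  (forall z, z != 0 -> p.[z] = 0) -> p = 0.
Proof.
move=> p0; pose rs := [seq n.+1%:R | n <- iota 0 (size p)] : seq R.
apply: (@roots_geq_poly_eq0 _ _ rs); last by rewrite size_map size_iota.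
- by apply/allP => _ /mapP[n _ ->]; apply/rootP/p0; rewrite pnatr_eq0.
- by rewrite map_inj_uniq ?iota_uniq // => m n /eqP; rewrite eqr_nat eqSS => /eqP.
Qed.

Section Evaluation.
Variable C : numClosedFieldType.
Implicit Types (u v w x : laurent C) (z : C).

Definition leval u z : C := \sum_(i <- finsupp u) u i * z ^ i.

Lemma leval_fsfun u (S : {fset int}) (F : int -> C) z :
  (forall k, u k = if k \in S then F k else 0) ->
  leval u z = \sum_(k <- S) F k * z ^ k.
Proof.
move=> uE; have suppS : finsupp u `<=` S.
  by apply/fsubsetP => k; rewrite mem_finsupp uE; case: ifP; rewrite ?eqxx.
rewrite /leval (big_fset_incl _ suppS) => [|k _]; last first.
  by rewrite mem_finsupp negbK => /eqP ->; rewrite mul0r.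
by apply: eq_big_seq => k kS; rewrite uE kS.
Qed.

Lemma leval_supp u (S : {fset int}) z :
  finsupp u `<=` S -> leval u z = \sum_(k <- S) u k * z ^ k.
Proof.
move=> suppS; apply: leval_fsfun => k; case: ifP => // /negbT kS.
by apply/eqP; rewrite -[_ == _]negbK -mem_finsupp; apply: contra kS; apply/fsubsetP.
Qed.

Lemma leval_add u v z : leval (ladd u v) z = leval u z + leval v z.
Proof.
rewrite (leval_fsfun (S := finsupp u `|` finsupp v) (F := fun k => u k + v k)).
  rewrite (leval_supp z (fsubsetUl _ (finsupp v))).
  rewrite (leval_supp z (fsubsetUr (finsupp u) _)) -big_split.
  by apply: eq_bigr => k _; rewrite mulrDl.
by move=> k; rewrite fsfunE.
Qed.

Lemma leval_sub u v z : leval (lsub u v) z = leval u z - leval v z.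
Proof.
rewrite (leval_fsfun (S := finsupp u `|` finsupp v) (F := fun k => u k - v k)).
  rewrite (leval_supp z (fsubsetUl _ (finsupp v))).
  rewrite (leval_supp z (fsubsetUr (finsupp u) _)) -sumrB.
  by apply: eq_bigr => k _; rewrite mulrBl.
by move=> k; rewrite fsfunE.
Qed.

Lemma leval_mono a c z : leval (lmono a c) z = a * z ^ c.
Proof.
rewrite (leval_fsfun (S := [fset c]) (F := fun=> a)) ?big_seq_fset1 //.
by move=> k; rewrite fsfunE.
Qed.

Lemma leval_mul u v z : z != 0 -> leval (lmul u v) z = leval u z * leval v z.
Proof.
move=> z0; set S := [fset i + j | i in finsupp u, j in finsupp v].
rewrite (leval_fsfun (S := S) (F := fun k => \sum_(i <- finsupp u) u i * v (k - i)));
  last by move=> k; rewrite fsfunE.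
under eq_bigr => k _ do rewrite mulr_suml.
rewrite exchange_big [leval u z]/leval mulr_suml; apply: eq_big_seq => i iu.
have shiftS : [fset i + j | j in finsupp v] `<=` S.
  by apply/fsubsetP => _ /imfsetP[j /= jv ->]; apply/imfset2P; exists i => //; exists j.
have -> : leval v z = \sum_(k <- S) v (k - i) * z ^ (k - i).
  rewrite -(big_fset_incl _ shiftS) => [|k _ kv]; last first.
    suff -> : v (k - i) = 0 by rewrite mul0r.
    apply/eqP; rewrite -[_ == _]negbK -mem_finsupp; apply: contra kv => kiv.
    by apply/imfsetP; exists (k - i); rewrite //= addrC subrK.
  rewrite big_imfset /= => [|j j' _ _ /addrI //].
  by apply: eq_bigr => j _; rewrite addrC addKr.
rewrite !mulr_sumr; apply: eq_bigr => k _.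
have -> : z ^ k = z ^ i * z ^ (k - i) by rewrite -expfzDr // addrC subrK.
by rewrite !mulrA (mulrAC (u i)).
Qed.

Lemma leval_refl u z : leval (lrefl u) z = leval u z^-1.
Proof.
rewrite (leval_fsfun (S := [fset - i | i in finsupp u]) (F := fun k => u (- k)));
  last by move=> k; rewrite fsfunE.
rewrite big_imfset /= => [|i j _ _ /oppr_inj //].
by apply: eq_bigr => i _; rewrite opprK exprz_inv.
Qed.

Lemma leval_star u z : z != 0 -> leval (lstar u) z = (leval u (z^*)^-1)^*.
Proof.
move=> z0.
rewrite (leval_fsfun (S := [fset - i | i in finsupp u]) (F := fun k => (u (- k))^*));
  last by move=> k; rewrite fsfunE.
rewrite big_imfset /= => [|i j _ _ /oppr_inj //].
rewrite rmorph_sum; apply: eq_bigr => i _.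
by rewrite opprK rmorphM exprz_inv rmorphXz /= ?conjCK // unitfE conjC_eq0.
Qed.

Lemma leval_eq0 w : (forall z, z != 0 -> leval w z = 0) -> forall k, w k = 0.
Proof.
move=> w0 k; have [kw|] := boolP (k \in finsupp w); last first.
  by rewrite mem_finsupp negbK => /eqP.
(* z^N w(z) is a polynomial with the coefficients of w, vanishing on C^x. *)
pose N := (\sum_(i <- finsupp w) `|i|)%N.
have shift_ge0 i : i \in finsupp w -> 0 <= i + N%:Z.
  move=> iw; have : (`|i| <= N)%N by rewrite /N (big_fsetD1 i) //= leq_addr.
  lia.
pose p : {poly C} := \sum_(i <- finsupp w) w i *: 'X^(absz (i + N%:Z)).
have p0 : p = 0.
  apply: poly_eq0_on_nonzero => z z0; rewrite horner_sum.
  transitivity (z ^ N%:Z * leval w z); last by rewrite w0 ?mulr0.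
  rewrite /leval mulr_sumr; apply: eq_big_seq => i iw.
  rewrite hornerZ hornerXn exprnP gez0_abs ?shift_ge0 // expfzDr //; ring.
have : p`_(absz (k + N%:Z)) = w k.
  rewrite coef_sumMXn big_mkcond (big_fsetD1 k) //= eqxx big1_fset ?addr0 //.
  move=> i; rewrite in_fsetD1 => /andP[ik iw] _; case: eqP => // ik_abs.
  by move: ik; have := shift_ge0 i iw; have := shift_ge0 k kw; lia.
by rewrite p0 coef0 => wk0; move: kw; rewrite mem_finsupp -wk0 eqxx.
Qed.

Lemma leval_inj u v : (forall z, z != 0 -> leval u z = leval v z) -> u = v.
Proof.
move=> uv; have uv0 : forall k, lsub u v k = 0.
  by apply: leval_eq0 => z z0; rewrite leval_sub uv ?subrr.
apply/fsfunP => k; have := uv0 k; rewrite fsfunE; case: ifP => [_ /eqP|].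
  by rewrite subr_eq0 => /eqP.
move=> /negbT; rewrite in_fsetU negb_or !mem_finsupp !negbK => /andP[/eqP -> /eqP ->] //.
Qed.

Lemma lstar_add u v : lstar (ladd u v) = ladd (lstar u) (lstar v).
Proof. by apply: leval_inj => z z0; rewrite !(leval_add, leval_star) // rmorphD. Qed.

Lemma lstar_mul u v : lstar (lmul u v) = lmul (lstar u) (lstar v).
Proof.
apply: leval_inj => z z0.
by rewrite !(leval_mul, leval_star) ?rmorphM // invr_eq0 conjC_eq0.
Qed.

Lemma lstar_mono (a : C) c : lstar (lmono a c) = lmono a^* (- c).
Proof.
apply: leval_inj => z z0.
rewrite leval_star // !leval_mono rmorphM rmorphXz ?unitfE ?invr_eq0 ?conjC_eq0 //=.
by rewrite fmorphV /= conjCK exprz_inv.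
Qed.

Lemma lstarK u : lstar (lstar u) = u.
Proof.
apply: leval_inj => z z0.
by rewrite !leval_star ?invr_eq0 ?conjC_eq0 //= conjCK fmorphV /= conjCK invrK.
Qed.

Lemma sym_typeP u e c :
  sym_type u e c <-> forall z, z != 0 -> leval u z = e * z ^ c * leval u z^-1.
Proof.
split=> [uE z z0 | uE]; first by rewrite {1}uE leval_mul // leval_mono leval_refl.
by apply: leval_inj => z z0; rewrite leval_mul // leval_mono leval_refl uE.
Qed.

Lemma sym_type_add u v e c :
  sym_type u e c -> sym_type v e c -> sym_type (ladd u v) e c.
Proof.
by rewrite !sym_typeP => hu hv z z0; rewrite !leval_add (hu z) ?(hv z) // mulrDr.
Qed.

Lemma sym_type_mul u v e f c d :
  sym_type u e c -> sym_type v f d -> sym_type (lmul u v) (e * f) (c + d).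
Proof.
rewrite !sym_typeP => hu hv z z0.
by rewrite !leval_mul ?invr_eq0 // (hu z) ?(hv z) // expfzDr //; ring.
Qed.

Lemma sym_type_mono (a : C) c : sym_type (lmono a c) 1 (c + c).
Proof.
apply/sym_typeP => z z0; have zc : z ^ c != 0 by rewrite expfz_neq0.
by rewrite !leval_mono exprz_inv -invr_expz expfzDr //; field.
Qed.

Lemma sym_type_star u e c : sym_type u e c -> sym_type (lstar u) e^* (- c).
Proof.
rewrite !sym_typeP => hu z z0; have w0 : (z^*)^-1 != 0 by rewrite invr_eq0 conjC_eq0.
rewrite !leval_star ?invr_eq0 // (hu _ w0) !rmorphM rmorphXz ?unitfE //=.
by rewrite !fmorphV /= conjCK exprz_inv.
Qed.

(* u5 = lcross u1 u2 u3 u4 c1 and u6 = lcross u2 u1 u3 u4 c1. *)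
Definition lcross u v w x c : laurent C :=
  ladd (lmul u w) (lmul (lmul (lmono 1 c) (lstar v)) x).

Definition lnorm u : laurent C := lmul u (lstar u).

Lemma sym_type_lcross u v w x e f g h a b a' b' c :
  sym_type u e a -> sym_type v f b -> sym_type w g a' -> sym_type x h b' ->
  f^* * h = e * g -> c + c - b + b' = a + a' ->
  sym_type (lcross u v w x c) (e * g) (a + a').
Proof.
move=> su sv sw sx efgh abc; apply: sym_type_add; first exact: sym_type_mul.
rewrite -efgh -abc -[f^*]mul1r.
apply: sym_type_mul sx; apply: sym_type_mul; [exact: sym_type_mono | exact: sym_type_star].
Qed.

Lemma lstar_lcross u v w x c :
  lstar (lcross u v w x c) =
  ladd (lmul (lstar u) (lstar w)) (lmul (lmul (lmono 1 (- c)) v) (lstar x)).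
Proof. by rewrite /lcross lstar_add !lstar_mul lstar_mono lstarK rmorph1. Qed.

Lemma lnorm_lcross u v w x c :
  lsub (lnorm (lcross u v w x c)) (lnorm (lcross v u w x c)) =
  lmul (lsub (lnorm u) (lnorm v)) (lsub (lnorm w) (lnorm x)).
Proof.
rewrite /lnorm !lstar_lcross /lcross; apply: leval_inj => z z0.
rewrite !(leval_sub, leval_add, leval_mul _ _ z0, leval_mono) -invr_expz.
have zc : z ^ c != 0 by rewrite expfz_neq0.
by field.
Qed.

Lemma lmono_inj (a b : C) c d : a != 0 -> lmono a c = lmono b d -> a = b /\ c = d.
Proof.
move=> a0 /fsfunP/(_ c); rewrite !fsfunE !inE eqxx.
by case: eqP => [-> // | _ a_eq0]; move: a0; rewrite a_eq0 eqxx.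
Qed.

Lemma sign_neq0 (e : C) : e = 1 \/ e = -1 -> e != 0.
Proof. by case=> ->; rewrite ?oppr_eq0 oner_eq0. Qed.

Lemma conjC_sign (e : C) : e = 1 \/ e = -1 -> e^* = e.
Proof. by case=> ->; rewrite ?rmorphN rmorph1. Qed.

End Evaluation.

Theorem lemma3p15 (C : numClosedFieldType)
  (u1 u2 u3 u4 : laurent C) (e1 e2 e3 e4 : C) (c1 c2 c3 c4 : int)
  (he1 : e1 = 1 \/ e1 = -1) (he2 : e2 = 1 \/ e2 = -1)
  (he3 : e3 = 1 \/ e3 = -1) (he4 : e4 = 1 \/ e4 = -1)
  (hS1 : Sym_is u1 e1 c1) (hS2 : Sym_is u2 e2 c2)
  (hS3 : Sym_is u3 e3 c3) (hS4 : Sym_is u4 e4 c4)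
  (hratio : lmono (e1 / e2) (c1 - c2) = lmono (e3 / e4) (c3 - c4)) :
  let u5 := ladd (lmul u1 u3) (lmul (lmul (lmono 1 c1) (lstar u2)) u4) in
  let u6 := ladd (lmul u2 u3) (lmul (lmul (lmono 1 c1) (lstar u1)) u4) in
  sym_type u5 (e1 * e3) (c1 + c3) /\
      sym_type u6 (e2 * e3) (c2 + c3) /\
      lmono ((e1 * e3) / (e2 * e3)) ((c1 + c3) - (c2 + c3))
        = lmono (e1 / e2) (c1 - c2)
      /\ lmono (e1 / e2) (c1 - c2) = lmono (e3 / e4) (c3 - c4)
    /\ lsub (lmul u5 (lstar u5)) (lmul u6 (lstar u6))
      = lmul (lsub (lmul u1 (lstar u1)) (lmul u2 (lstar u2)))
             (lsub (lmul u3 (lstar u3)) (lmul u4 (lstar u4))).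
Proof.
move=> u5 u6; case: hS1 hS2 hS3 hS4 => [_ s1] [_ s2] [_ s3] [_ s4].
have [he hc] := lmono_inj (mulf_neq0 (sign_neq0 he1) (invr_neq0 (sign_neq0 he2))) hratio.
have e1E : e1 = e2 * e3 * e4.
  by rewrite -(divfK (sign_neq0 he2) e1) he; case: he4 => ->; rewrite ?invrN invr1; ring.
split; [|split; [|split; [|split]]].
- apply: (sym_type_lcross s1 s2 s3 s4); last by lia.
  by rewrite conjC_sign // e1E; case: he3 => ->; ring.
- apply: (sym_type_lcross s2 s1 s3 s4); last by lia.
  by rewrite conjC_sign // e1E; case: he4 => ->; ring.
- by congr lmono; [field; rewrite !sign_neq0 | ring].
- exact: hratio.
- exact: lnorm_lcross.
Qed.
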